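(* Let $\mathbf{A}$ be a 5-dimensional LV algebra with natural basis $e_1,\dots,e_5$ such that $e_ie_j\neq\frac12(e_i+e_j)$ for $\{i,j\}\in\{\{1,2\},\{2,3\},\{3,4\},\{4,5\},\{1,5\}\}$ and $e_ie_j=\frac12(e_i+e_j)$ for $\{i,j\}\in\{\{1,3\},\{1,4\},\{2,4\},\{2,5\},\{3,5\}\}$. Then $\mathrm{Der}(\mathbf{A})=\{0\}$.
   Context: Let $\mathbb{F}$ be a field of characteristic different from $2$. A Lotka–Volterra (LV) algebra of dimension $5$ over $\mathbb{F}$ is a commutative (not necessarily associative) $\mathbb{F}$-algebra $\mathbf{A}$ with a basis $e_1,\dots,e_5$ (the natural basis) such that $e_ie_j=\alpha_{ij}e_i+\alpha_{ji}e_j$ with $\alpha_{ij}\in\mathbb{F}$, $\alpha_{ii}=\frac12$ and $\alpha_{ij}+\alpha_{ji}=1$ for all $i,j$. A derivation is a linear map $D:\mathbf{A}\to\mathbf{A}$ with $D(uv)=D(u)v+uD(v)$ for all $u,v$; $\mathrm{Der}(\mathbf{A})$ is the set of derivations. *)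

From HB Require Import structures.
From mathcomp Require Import all_boot all_order all_algebra.
Set Implicit Arguments. Unset Strict Implicit. Unset Printing Implicit Defensive.
Import Order.TTheory GRing.Theory Num.Theory.
Local Open Scope ring_scope.

(* 5-dimensional LV algebras: the underlying space is 'rV[F]_5, the natural
   basis vector e_i (0-based i : 'I_5) is delta_mx 0 i, and the structure
   constants are a matrix alpha with e_i e_j = alpha i j e_i + alpha j i e_j. *)

Definition lv_e (F : fieldType) (i : 'I_5) : 'rV[F]_5 := delta_mx 0 i.

Definition lv_prod (F : fieldType) (alpha : 'M[F]_5) (i j : 'I_5) : 'rV[F]_5 :=
  alpha i j *: lv_e F i + alpha j i *: lv_e F j.

Definition lv_mul (F : fieldType) (alpha : 'M[F]_5) (u v : 'rV[F]_5) : 'rV[F]_5 :=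
  \sum_(i < 5) \sum_(j < 5) (u 0 i * v 0 j) *: lv_prod alpha i j.

Definition is_LV (F : fieldType) (alpha : 'M[F]_5) : Prop :=
  (forall i, alpha i i = 2%:R^-1) /\ (forall i j, alpha i j + alpha j i = 1).

(* a linear map D : A -> A is represented by its matrix acting on row vectors *)
Definition is_derivation (F : fieldType) (alpha : 'M[F]_5) (D : 'M[F]_5) : Prop :=
  forall u v : 'rV[F]_5,
    lv_mul alpha u v *m D = lv_mul alpha (u *m D) v + lv_mul alpha u (v *m D).

Definition lv_half (F : fieldType) (alpha : 'M[F]_5) (i j : nat) : Prop :=
  lv_mul alpha (lv_e F (inord i)) (lv_e F (inord j))
  = 2%:R^-1 *: (lv_e F (inord i) + lv_e F (inord j)).

From HB Require Import structures.
From mathcomp Require Import all_boot all_order all_algebra.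
From mathcomp Require Import ring.
Import GRing.Theory.
Local Open Scope ring_scope.

(* Reading the Leibniz rule for [e_i e_j] at the coordinate [k] shows that
   [D_ik] vanishes whenever [e_k e_i] is not the half-sum, and that [D_jk = 0]
   propagates to [D_ik] whenever [e_i e_j] is the half-sum but [e_k e_j] is not;
   the diagonal then vanishes because [e_i e_i = e_i]. Hence [Der A = 0] as soon
   as, for [i <> k], some [j] has [e_i e_j] a half-sum but not [e_k e_j]: in the
   graph of non-half products, no neighbourhood contains another. For the
   pentagon graph of the theorem this is a finite check. *)

Lemma sum_mul_delta {R : pzRingType} {n} (f : 'I_n -> R) k :
  \sum_(b < n) f b * (b == k)%:R = f k.
Proof.
by rewrite (bigD1 k) //= eqxx mulr1 big1 ?addr0 // => b /negbTE ->; rewrite mulr0.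
Qed.

Section LVProduct.
Context {F : fieldType} {alpha : 'M[F]_5}.

Lemma lv_e_coord (i l : 'I_5) : lv_e F i 0 l = (l == i)%:R.
Proof. by rewrite mxE eqxx. Qed.

Lemma sum_lv_e_coord {V : lmodType F} (i : 'I_5) (f : 'I_5 -> V) :
  \sum_(l < 5) lv_e F i 0 l *: f l = f i.
Proof.
rewrite (bigD1 i) //= lv_e_coord eqxx scale1r big1 ?addr0 // => l /negbTE li.
by rewrite lv_e_coord li scale0r.
Qed.

Lemma lv_mul_el (i : 'I_5) (v : 'rV[F]_5) :
  lv_mul alpha (lv_e F i) v = \sum_(b < 5) v 0 b *: lv_prod alpha i b.
Proof.
rewrite /lv_mul -(sum_lv_e_coord i (fun a => \sum_b v 0 b *: lv_prod alpha a b)).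
by apply: eq_bigr => a _; rewrite scaler_sumr; apply: eq_bigr => b _; rewrite scalerA.
Qed.

Lemma lv_mul_er (u : 'rV[F]_5) (j : 'I_5) :
  lv_mul alpha u (lv_e F j) = \sum_(a < 5) u 0 a *: lv_prod alpha a j.
Proof.
apply: eq_bigr => a _; rewrite -(sum_lv_e_coord j (lv_prod alpha a)) scaler_sumr.
by apply: eq_bigr => b _; rewrite scalerA.
Qed.

Lemma lv_mul_ee (i j : 'I_5) :
  lv_mul alpha (lv_e F i) (lv_e F j) = lv_prod alpha i j.
Proof. by rewrite lv_mul_el sum_lv_e_coord. Qed.

Lemma lv_prod_coord (i j k : 'I_5) :
  lv_prod alpha i j 0 k = alpha i j * (i == k)%:R + alpha j i * (j == k)%:R.
Proof. by rewrite !mxE eqxx ![k == _]eq_sym. Qed.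

Lemma lv_mul_el_coord (i : 'I_5) (v : 'rV[F]_5) k :
  lv_mul alpha (lv_e F i) v 0 k
  = (i == k)%:R * \sum_(b < 5) v 0 b * alpha i b + v 0 k * alpha k i.
Proof.
rewrite lv_mul_el summxE; under eq_bigr do rewrite mxE lv_prod_coord mulrDr.
by rewrite big_split /= mulr_sumr; congr (_ + _);
  [apply: eq_bigr => b _ | rewrite -(sum_mul_delta (fun b => v 0 b * alpha b i));
   apply: eq_bigr => b _]; ring.
Qed.

Lemma lv_mul_er_coord (u : 'rV[F]_5) (j : 'I_5) k :
  lv_mul alpha u (lv_e F j) 0 k
  = u 0 k * alpha k j + (j == k)%:R * \sum_(a < 5) u 0 a * alpha j a.
Proof.
rewrite lv_mul_er summxE; under eq_bigr do rewrite mxE lv_prod_coord mulrDr.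
by rewrite big_split /= mulr_sumr; congr (_ + _);
  [rewrite -(sum_mul_delta (fun a => u 0 a * alpha a j)); apply: eq_bigr => a _
  | apply: eq_bigr => a _]; ring.
Qed.

Lemma lv_derivation_coord {D : 'M[F]_5} : is_derivation alpha D -> forall i j k,
  alpha i j * D i k + alpha j i * D j k =
  D i k * alpha k j + D j k * alpha k i
  + (j == k)%:R * \sum_(l < 5) D i l * alpha j l
  + (i == k)%:R * \sum_(l < 5) D j l * alpha i l.
Proof.
move=> hD i j k; have := congr1 (fun w : 'rV_5 => w 0 k) (hD (lv_e F i) (lv_e F j)).
rewrite /= lv_mul_ee [X in _ = X]mxE lv_mul_el_coord lv_mul_er_coord.
rewrite mulmxDl -!scalemxAl -!rowE !mxE => E.
rewrite [X in (j == k)%:R * X](eq_bigr (fun a => D i a * alpha j a)) in E;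
  last by move=> a _; rewrite mxE.
rewrite [X in (i == k)%:R * X](eq_bigr (fun b => D j b * alpha i b)) in E;
  last by move=> b _; rewrite mxE.
by rewrite E; ring.
Qed.

End LVProduct.

Section LVAlgebra.
Context {F : fieldType} {alpha : 'M[F]_5}.
Hypotheses (hchar : (2%:R : F) != 0) (hLV : is_LV alpha).

Lemma half_add_half : 2%:R^-1 + 2%:R^-1 = 1 :> F.
Proof. by field. Qed.

Lemma double_eq1 (x : F) : (x + x == 1) = (x == 2%:R^-1).
Proof.
apply/eqP/eqP => [x2 | ->]; last exact: half_add_half.
have -> : x = (x + x) / 2%:R by field.
by rewrite x2 mul1r.
Qed.

Lemma alpha_half_sym {i j} : alpha i j = 2%:R^-1 -> alpha j i = 2%:R^-1.
Proof. by move=> half; apply: (@addrI _ 2%:R^-1); rewrite half_add_half -half hLV.2. Qed.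

Lemma alpha_halfC i j : (alpha i j == 2%:R^-1) = (alpha j i == 2%:R^-1).
Proof. by apply/eqP/eqP; apply: alpha_half_sym. Qed.

Lemma lv_half_alphaP (i j : 'I_5) : i != j ->
  reflect (lv_mul alpha (lv_e F i) (lv_e F j) = 2%:R^-1 *: (lv_e F i + lv_e F j))
          (alpha i j == 2%:R^-1).
Proof.
move=> ij; rewrite lv_mul_ee /lv_prod; apply: (iffP eqP) => [half | /rowP/(_ i)].
  by rewrite half (alpha_half_sym half) scalerDr.
by rewrite !mxE !eqxx (negbTE ij) /= mulr1 mulr0 !addr0 mulr1.
Qed.

Lemma lv_halfP (m n : nat) : [&& m < 5, n < 5 & m != n]%N ->
  reflect (lv_half alpha m n) (alpha (inord m) (inord n) == 2%:R^-1).
Proof.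
case/and3P => m5 n5 mn; apply: lv_half_alphaP.
by rewrite -(inj_eq val_inj) /= !inordK.
Qed.

Section Derivation.
Context {D : 'M[F]_5} (hD : is_derivation alpha D).

Lemma derivation_entry_eq0 i k : i != k -> alpha k i != 2%:R^-1 -> D i k = 0.
Proof.
move=> ik; apply: contraNeq => nz; rewrite -double_eq1.
have := lv_derivation_coord hD i i k.
rewrite (negbTE ik) !mul0r !addr0 hLV.1 -mulrDl half_add_half mul1r -mulrDr => e.
by rewrite -(inj_eq (mulfI nz)) mulr1 -e.
Qed.

Lemma derivation_entry_eq0_transfer i j k : k != i -> k != j ->
  alpha i j = 2%:R^-1 -> D j k = 0 -> alpha k j != 2%:R^-1 -> D i k = 0.
Proof.
move=> ki kj half_ij Djk; apply: contraNeq => nz.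
have := lv_derivation_coord hD i j k.
rewrite ![_ == k]eq_sym (negbTE ki) (negbTE kj) Djk !mul0r !mulr0 !addr0.
by rewrite half_ij => e; rewrite -(inj_eq (mulfI nz)) -e mulrC.
Qed.

Lemma derivation_diag_eq0 i : (forall l, l != i -> D i l = 0) -> D i i = 0.
Proof.
move=> offdiag; have sum_row : \sum_(l < 5) D i l * alpha i l = D i i * 2%:R^-1.
  rewrite (bigD1 i) //= hLV.1 big1 ?addr0 // => l /offdiag ->.
  by rewrite mul0r.
have := lv_derivation_coord hD i i i; rewrite eqxx !mul1r sum_row hLV.1 => e.
have -> : D i i = D i i * 2%:R^-1 + D i i * 2%:R^-1 + D i i * 2%:R^-1
  + D i i * 2%:R^-1 - (2%:R^-1 * D i i + 2%:R^-1 * D i i) by field.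
by rewrite -e subrr.
Qed.

Lemma lv_derivation_eq0 :
  (forall i k, i != k -> exists2 j, alpha i j = 2%:R^-1 & alpha k j != 2%:R^-1) ->
  D = 0.
Proof.
move=> separated.
have offdiag i k : i != k -> D i k = 0.
  move=> ik; have [j half_ij nhalf_kj] := separated i k ik.
  have jk : j != k by apply: contraNneq nhalf_kj => ->; rewrite hLV.1.
  have Djk := derivation_entry_eq0 j k jk nhalf_kj.
  by apply: (derivation_entry_eq0_transfer i j k) half_ij Djk nhalf_kj; rewrite eq_sym.
apply/matrixP => i k; rewrite mxE; have [<- | ki] := eqVneq k i.
  by apply: derivation_diag_eq0 => l li; apply: offdiag; rewrite eq_sym.
by apply: offdiag; rewrite eq_sym.
Qed.

End Derivation.

End LVAlgebra.

Definition pentagon_adj (m n : nat) : bool := ((m.+1 %% 5 == n) || (n.+1 %% 5 == m))%N.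

Lemma pentagon_nbhd_not_subset {i k : 'I_5} :
  i != k -> exists2 j : 'I_5, ~~ pentagon_adj i j & pentagon_adj k j.
Proof.
move=> ik; pose j := (if pentagon_adj i (k.+1 %% 5) then k.+4 %% 5 else k.+1 %% 5)%N.
have j_lt5 : (j < 5)%N by rewrite /j; case: ifP => _; rewrite ltn_pmod.
suff: ~~ pentagon_adj i j && pentagon_adj k j by case/andP; exists (Ordinal j_lt5).
rewrite /j; clear j_lt5 j; move: ik.
by case: i k => [[|[|[|[|[|//]]]]] ?] [[|[|[|[|[|//]]]]] ?].
Qed.

Theorem mainTheorem15 (F : fieldType) (hchar : (2%:R : F) != 0)
  (alpha : 'M[F]_5) (hLV : is_LV alpha)
  (h12 : ~ lv_half alpha 0 1) (h23 : ~ lv_half alpha 1 2)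
  (h34 : ~ lv_half alpha 2 3) (h45 : ~ lv_half alpha 3 4)
  (h15 : ~ lv_half alpha 0 4)
  (h13 : lv_half alpha 0 2) (h14 : lv_half alpha 0 3)
  (h24 : lv_half alpha 1 3) (h25 : lv_half alpha 1 4)
  (h35 : lv_half alpha 2 4) :
  forall D : 'M[F]_5, is_derivation alpha D -> D = 0.
Proof.
have halfP := lv_halfP hchar hLV.
move: h12 h23 h34 h45 h15 => /(halfP 0 1 isT)/negbTE h12 /(halfP 1 2 isT)/negbTE h23
  /(halfP 2 3 isT)/negbTE h34 /(halfP 3 4 isT)/negbTE h45 /(halfP 0 4 isT)/negbTE h15.
move: h13 h14 h24 h25 h35 => /(halfP 0 2 isT) h13 /(halfP 0 3 isT) h14
  /(halfP 1 3 isT) h24 /(halfP 1 4 isT) h25 /(halfP 2 4 isT) h35.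
have hs := (h12, h23, h34, h45, h15, h13, h14, h24, h25, h35).
have halfE (i j : 'I_5) : (alpha i j == 2%:R^-1) = ~~ pentagon_adj i j.
  rewrite -{1}(inord_val i) -{1}(inord_val j).
  case: i j => [[|[|[|[|[|//]]]]] ?] [[|[|[|[|[|//]]]]] ?] /=;
    by rewrite ?hLV.1 ?eqxx ?hs // alpha_halfC ?hs.
move=> D hD; apply: (lv_derivation_eq0 hchar hLV hD) => i k ik.
have [j nadj_ij adj_kj] := pentagon_nbhd_not_subset ik.
by exists j; [apply/eqP; rewrite halfE | rewrite halfE adj_kj].
Qed.
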